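(* The normalizer of $\operatorname{IET}^{+}$ in $\operatorname{IET}^{\bowtie}$ is $\operatorname{IET}^{\pm}$.
   Context: $X=[0,1[$. $\widehat{\operatorname{IET}^{\bowtie}}$ is the group of bijections $f:X\to X$ for which there is a finite partition of $X$ into intervals $[a,b[$ such that on each $]a,b[$, $f$ has the form $x\mapsto x+c$ or $x\mapsto -x+c$; $\widehat{\operatorname{IET}^{+}}$ is the subgroup of those for which only the form $x\mapsto x+c$ occurs. With ${\mathfrak S}_{\mathrm{fin}}$ the normal subgroup of finitely supported permutations, $\operatorname{IET}^{\bowtie}=\widehat{\operatorname{IET}^{\bowtie}}/{\mathfrak S}_{\mathrm{fin}}$ and $\operatorname{IET}^{+}=\widehat{\operatorname{IET}^{+}}/{\mathfrak S}_{\mathrm{fin}}$. Let $\mathcal R\in\operatorname{IET}^{\bowtie}$ be the class of any bijection of $X$ agreeing with $x\mapsto 1-x$ outside a finite set. Define $\operatorname{IET}^{-}=\mathcal R\cdot\operatorname{IET}^{+}$ and $\operatorname{IET}^{\pm}=\operatorname{IET}^{+}\cup\operatorname{IET}^{-}$ (a subgroup). *)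

From Stdlib Require Import Reals List.
Open Scope R_scope.

Definition X : Type := {x : R | 0 <= x < 1}.
Definition xval (x : X) : R := proj1_sig x.

Definition comp (f g : X -> X) : X -> X := fun x => f (g x).

Definition inverse_pair (f g : X -> X) : Prop :=
  (forall x, g (f x) = x) /\ (forall y, f (g y) = y).

Definition bijection (f : X -> X) : Prop := exists g, inverse_pair f g.

Definition piecewise_isometric (orientation_reversing_allowed : bool)
    (f : X -> X) : Prop :=
  exists (n : nat) (a : nat -> R),
    a 0%nat = 0 /\ a n = 1 /\
    (forall i, (i < n)%nat -> a i < a (S i)) /\
    (forall i, (i < n)%nat -> exists c : R,
        (forall x : X, a i < xval x < a (S i) -> xval (f x) = xval x + c)
        \/ (orientation_reversing_allowed = true /\
            forall x : X, a i < xval x < a (S i) -> xval (f x) = - xval x + c)).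

Definition IETbow_hat (f : X -> X) : Prop := bijection f /\ piecewise_isometric true f.
Definition IETplus_hat (f : X -> X) : Prop := bijection f /\ piecewise_isometric false f.

(* f and g agree outside a finite set, i.e. have the same class modulo S_fin *)
Definition eqfin (f g : X -> X) : Prop :=
  exists l : list X, forall x, ~ In x l -> f x = g x.

(* r is a representative of the class R: a bijection of X agreeing with
   x |-> 1 - x outside a finite set *)
Definition is_R_rep (r : X -> X) : Prop :=
  bijection r /\ exists l : list X, forall x, ~ In x l -> xval (r x) = 1 - xval x.

Definition in_IETplus (g : X -> X) : Prop :=
  exists h, IETplus_hat h /\ eqfin g h.

Definition in_IETminus (g : X -> X) : Prop :=
  exists r h, is_R_rep r /\ IETplus_hat h /\ eqfin g (comp r h).

Definition in_IETpm (g : X -> X) : Prop := in_IETplus g \/ in_IETminus g.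

(* the class of g (g in hat IET^bowtie) lies in the normalizer of IET^+ in
   IET^bowtie:  [g] IET^+ [g]^-1 = IET^+, i.e. both
   [g] IET^+ [g]^-1 <= IET^+ and [g]^-1 IET^+ [g] <= IET^+. *)
Definition in_normalizer_IETplus (g : X -> X) : Prop :=
  exists gi, inverse_pair g gi /\
    (forall h, IETplus_hat h -> in_IETplus (comp g (comp h gi))) /\
    (forall h, IETplus_hat h -> in_IETplus (comp gi (comp h g))).

(* An element of IET^{+-} is, away from finitely many breakpoints, an isometry
   of one fixed orientation; its inverse and its composites with elements of
   IET^+ are again of this form, so conjugating IET^+ by it stays in IET^+.
   Conversely, if g reverses orientation on one piece and preserves it on
   another, conjugating by g the exchange of two small intervals lying in these
   pieces gives a map that reverses orientation on an interval, hence is not in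
   IET^+.  Both sides of the equivalence thus say that g has a single
   orientation off finitely many points. *)

From Stdlib Require Import Reals List Lra Lia Classical ClassicalEpsilon ProofIrrelevance.
Open Scope R_scope.

Lemma xval_inj (x y : X) : xval x = xval y -> x = y.
Proof.
  destruct x as [x Hx], y as [y Hy]; simpl; intros <-.
  f_equal; apply proof_irrelevance.
Qed.

Lemma xval_range (x : X) : 0 <= xval x < 1.
Proof. exact (proj2_sig x). Qed.

(* Outside [0,1[ the junk value 0 is returned. *)
Definition toX (z : R) : X :=
  match excluded_middle_informative (0 <= z < 1) with
  | left Hz => exist _ z Hz
  | right _ => exist _ 0 (conj (Rle_refl 0) Rlt_0_1)
  end.

Lemma toX_val (z : R) : 0 <= z < 1 -> xval (toX z) = z.
Proof. intros Hz; unfold toX; destruct (excluded_middle_informative _); easy. Qed.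

Lemma inverse_pair_sym f g : inverse_pair f g -> inverse_pair g f.
Proof. intros [H1 H2]; split; assumption. Qed.

Lemma inverse_pair_comp f fi k ki : inverse_pair f fi -> inverse_pair k ki ->
  inverse_pair (comp f k) (comp ki fi).
Proof.
  intros [Hf1 Hf2] [Hk1 Hk2]; split; intros x; unfold comp.
  - rewrite Hf1; apply Hk1.
  - rewrite Hk2; apply Hf2.
Qed.

Lemma finite_choice {A : Type} (a0 : A) (P : nat -> A -> Prop) (n : nat) :
  (forall i, (i < n)%nat -> exists c, P i c) ->
  exists c : nat -> A, forall i, (i < n)%nat -> P i (c i).
Proof.
  induction n as [|n IH]; intros H.
  - exists (fun _ => a0); intros; lia.
  - destruct IH as [c Hc]; [intros i Hi; apply H; lia|].
    destruct (H n) as [cn Hcn]; [lia|].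
    exists (fun i => if Nat.eq_dec i n then cn else c i); intros i Hi.
    destruct (Nat.eq_dec i n) as [->|]; [assumption | apply Hc; lia].
Qed.

Definition partition (t : R) (n : nat) (a : nat -> R) : Prop :=
  a 0%nat = 0 /\ a n = t /\ forall i, (i < n)%nat -> a i < a (S i).

Lemma partition_mono t n a : partition t n a ->
  forall i j, (i <= j <= n)%nat -> a i <= a j.
Proof.
  intros (_ & _ & Ha) i j; induction j as [|j IH]; intros Hij.
  - replace i with 0%nat by lia; lra.
  - destruct (Nat.eq_dec i (S j)) as [->|]; [lra|].
    specialize (Ha j ltac:(lia)); specialize (IH ltac:(lia)); lra.
Qed.

Lemma partition_locate t n a : partition t n a ->
  forall y, 0 <= y < t -> exists i, (i < n)%nat /\ a i <= y < a (S i).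
Proof.
  intros (Ha0 & Han & _) y [Hy0 Hyt].
  enough (H : forall k, (k <= n)%nat -> y < a k -> exists i, (i < k)%nat /\ a i <= y < a (S i)).
  { destruct (H n) as (i & Hi & Hy); [lia | lra | exists i; auto]. }
  induction k as [|k IH]; intros Hk Hyk; [lra|].
  destruct (Rle_lt_dec (a k) y) as [Hle | Hlt].
  - exists k; split; [lia | lra].
  - destruct (IH ltac:(lia) Hlt) as (i & Hi & Hy); exists i; split; [lia | assumption].
Qed.

Definition sgn (s : bool) : R := if s then 1 else -1.

Definition isometric_on (s : bool) (f : X -> X) (u v : R) : Prop :=
  exists c, forall x : X, u < xval x < v -> xval (f x) = sgn s * xval x + c.

Definition isometric_pieces (s : bool) (f : X -> X) (t : R) : Prop :=
  exists n a, partition t n a /\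
    forall i, (i < n)%nat -> isometric_on s f (a i) (a (S i)).

Definition avoids (L : list R) (u v : R) : Prop := forall z, In z L -> ~ (u < z < v).

(* Unlike [isometric_pieces], this is insensitive to changing f at finitely
   many points, hence a property of classes modulo finitely supported
   permutations. *)
Definition isometric_off_finite (s : bool) (f : X -> X) : Prop :=
  exists L : list R, forall u v, u < v -> avoids L u v -> isometric_on s f u v.

Lemma isometric_on_empty s f u v :
  ~ (exists y : X, u < xval y < v) -> isometric_on s f u v.
Proof. intros Hempty; exists 0; intros x Hx; exfalso; eauto. Qed.

Lemma isometric_on_sub s f u v u' v' :
  isometric_on s f u v -> u <= u' -> v' <= v -> isometric_on s f u' v'.
Proof. intros [c Hc] Hu Hv; exists c; intros x Hx; apply Hc; lra. Qed.

Lemma avoids_side L u v z : avoids L u v -> In z L -> z <= u \/ v <= z.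
Proof.
  intros Hav Hz; destruct (Rle_lt_dec z u); [auto|].
  destruct (Rle_lt_dec v z); [auto|]. exfalso; apply (Hav z); auto.
Qed.

Lemma avoids_app L1 L2 u v : avoids (L1 ++ L2) u v -> avoids L1 u v /\ avoids L2 u v.
Proof. intros Hav; split; intros z Hz; apply Hav, in_or_app; auto. Qed.

Lemma avoids_gap L u v : u < v ->
  exists u' v', u <= u' /\ u' < v' /\ v' <= v /\ avoids L u' v'.
Proof.
  induction L as [|z L IH]; intros Huv.
  - exists u, v; repeat split; try lra. intros z [].
  - destruct (IH Huv) as (u1 & v1 & Hu1 & Huv1 & Hv1 & Hav).
    destruct (classic (u1 < z < v1)) as [Hz | Hz].
    + exists u1, z; repeat split; try lra.
      intros z' [<- | Hz'] ?; [lra | apply (Hav z'); auto; lra].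
    + exists u1, v1; repeat split; try lra.
      intros z' [<- | Hz']; auto.
Qed.

Lemma isometric_pieces_off_finite s f :
  isometric_pieces s f 1 -> isometric_off_finite s f.
Proof.
  intros (n & a & Ha & Hp). exists (map a (seq 0 (S n))). intros u v Huv Hav.
  destruct (classic (exists y : X, u < xval y < v)) as [[y Hy] | Hempty];
    [| now apply isometric_on_empty].
  assert (Hside : forall k, (k <= n)%nat -> a k <= u \/ v <= a k).
  { intros k Hk; apply (avoids_side _ _ _ _ Hav), in_map, in_seq; lia. }
  destruct (partition_locate _ _ _ Ha (xval y) (xval_range y)) as (i & Hi & Hyi).
  apply (isometric_on_sub _ _ (a i) (a (S i))); [now apply Hp | |].
  - destruct (Hside i ltac:(lia)); lra.
  - destruct (Hside (S i) ltac:(lia)); lra.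
Qed.

Lemma isometric_pieces_nil s f : isometric_pieces s f 0.
Proof.
  exists 0%nat, (fun _ => 0); split; [repeat split; intros; lia | intros; lia].
Qed.

Lemma isometric_pieces_snoc s f m t :
  isometric_pieces s f m -> m < t -> isometric_on s f m t -> isometric_pieces s f t.
Proof.
  intros (n & a & (Ha0 & Han & Hinc) & Hp) Hmt Hlast.
  exists (S n), (fun i => if Nat.leb i n then a i else t).
  assert (Hle : forall i, (i <= n)%nat -> Nat.leb i n = true) by (intros; apply Nat.leb_le; lia).
  assert (Hgt : Nat.leb (S n) n = false) by (apply Nat.leb_gt; lia).
  repeat split.
  - now rewrite Hle by lia.
  - now rewrite Hgt.
  - intros i Hi; rewrite Hle by lia.
    destruct (Nat.eq_dec i n) as [->|]; [rewrite Hgt; lra | rewrite Hle by lia; apply Hinc; lia].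
  - intros i Hi; rewrite Hle by lia.
    destruct (Nat.eq_dec i n) as [->|]; [rewrite Hgt, Han; exact Hlast|].
    rewrite Hle by lia; apply Hp; lia.
Qed.

Lemma list_max_between (L : list R) (t : R) : (exists z, In z L /\ 0 < z < t) ->
  exists m, In m L /\ 0 < m < t /\ forall z, In z L -> 0 < z < t -> z <= m.
Proof.
  induction L as [|z L IH]; intros [z0 [Hz0 Hz0t]]; [destruct Hz0|].
  destruct (classic (exists z', In z' L /\ 0 < z' < t)) as [Hex | Hno].
  - destruct (IH Hex) as (m & Hm & Hmt & Hmax).
    destruct (Rlt_le_dec m z) as [Hmz | Hzm]; [destruct (classic (0 < z < t)) as [Hzt | Hzt]|].
    + exists z; repeat split; [left | ..]; auto; try lra.
      intros z' [<- | Hz'] Hz't; [lra | specialize (Hmax z' Hz' Hz't); lra].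
    + exists m; repeat split; [right | ..]; auto; try lra.
      intros z' [<- | Hz'] Hz't; [tauto | auto].
    + exists m; repeat split; [right | ..]; auto; try lra.
      intros z' [<- | Hz'] Hz't; auto.
  - destruct Hz0 as [-> | Hz0]; [| exfalso; apply Hno; eauto].
    exists z0; repeat split; [left | ..]; auto; try lra.
    intros z' [<- | Hz'] Hz't; [lra | exfalso; apply Hno; eauto].
Qed.

(* Induction on the number of breakpoints: cut [0,t[ at the largest one. *)
Lemma isometric_off_finite_pieces_upto s f (N : nat) : forall L t,
  (length L <= N)%nat -> 0 < t ->
  (forall u v, 0 <= u -> u < v -> v <= t -> avoids L u v -> isometric_on s f u v) ->
  isometric_pieces s f t.
Proof.
  induction N as [|N IH]; intros L t HL Ht Hiso;
    (destruct (classic (exists z, In z L /\ 0 < z < t)) as [Hex | Hno];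
     [| apply (isometric_pieces_snoc s f 0); [apply isometric_pieces_nil | lra |];
        apply Hiso; try lra; intros z Hz Hzt; apply Hno; exists z; split; auto]).
  - destruct Hex as [z [Hz _]]; destruct L; [destruct Hz | simpl in HL; lia].
  - destruct (list_max_between L t Hex) as (m & Hm & Hmt & Hmax).
    apply (isometric_pieces_snoc s f m); [| lra |].
    + apply (IH (remove Req_dec_T m L)); [| lra |].
      * pose proof (remove_length_lt Req_dec_T L m Hm); lia.
      * intros u v Hu Huv Hv Hav; apply Hiso; try lra.
        intros z Hz Hzuv; destruct (Req_dec_T z m) as [-> | Hzm]; [lra|].
        apply (Hav z); [apply in_in_remove|]; auto.
    + apply Hiso; try lra.
      intros z Hz Hzmt; specialize (Hmax z Hz ltac:(lra)); lra.
Qed.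

Lemma isometric_off_finite_pieces s f :
  isometric_off_finite s f -> isometric_pieces s f 1.
Proof.
  intros [L HL]; apply (isometric_off_finite_pieces_upto s f (length L) L); auto; lra.
Qed.

Lemma isometric_off_finite_eqfin s f h :
  isometric_off_finite s h -> eqfin f h -> isometric_off_finite s f.
Proof.
  intros [L HL] [l Hl]. exists (L ++ map xval l). intros u v Huv Hav.
  destruct (avoids_app _ _ _ _ Hav) as [HavL Havl].
  destruct (HL u v Huv HavL) as [c Hc]. exists c; intros x Hx.
  rewrite Hl; [now apply Hc|]. intros Hin; apply (Havl (xval x)); [apply in_map|]; auto.
Qed.

Lemma sgn_eqb s1 s2 : sgn (Bool.eqb s1 s2) = sgn s1 * sgn s2.
Proof. destruct s1, s2; simpl; ring. Qed.

Lemma sgn_image_interval (s : bool) (c u v : R) : u < v -> exists u' v', u' < v' /\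
  (forall x, u < x < v -> u' < sgn s * x + c < v') /\
  (forall y, u' < y < v' -> u < sgn s * (y - c) < v) /\
  (forall y, sgn s * (sgn s * (y - c)) + c = y).
Proof.
  intros Huv; destruct s; simpl; [exists (u + c), (v + c) | exists (c - v), (c - u)];
    repeat split; intros; lra.
Qed.

(* The breakpoints of [comp f k] are those of k, the pullbacks under k of
   those of f, and the ends 0 and 1 (so that pullbacks stay inside X). *)
Lemma isometric_off_finite_comp s1 s2 k ki f : inverse_pair k ki ->
  isometric_off_finite s1 k -> isometric_off_finite s2 f ->
  isometric_off_finite (Bool.eqb s1 s2) (comp f k).
Proof.
  intros [Hk1 _] [Lk HLk] [Lf HLf].
  exists (0 :: 1 :: Lk ++ map (fun z => xval (ki (toX z))) Lf). intros u v Huv Hav.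
  destruct (classic (exists y : X, u < xval y < v)) as [[y0 Hy0] | Hempty];
    [| now apply isometric_on_empty].
  pose proof (xval_range y0).
  destruct (avoids_side _ _ _ 0 Hav ltac:(simpl; auto)); [| lra].
  destruct (avoids_side _ _ _ 1 Hav ltac:(simpl; auto)); [lra |].
  destruct (avoids_app Lk _ u v (fun z Hz => Hav z (or_intror (or_intror Hz))))
    as [HavLk Havpull].
  destruct (HLk u v Huv HavLk) as [c1 Hc1].
  destruct (sgn_image_interval s1 c1 u v Huv) as (u' & v' & Huv' & Hfwd & Hback & Hcancel).
  assert (HavLf : avoids Lf u' v').
  { intros z Hz Hzuv. set (z0 := sgn s1 * (z - c1)).
    assert (Hz0 : u < z0 < v) by (apply Hback; auto).
    assert (Hz0X : xval (toX z0) = z0) by (apply toX_val; lra).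
    assert (Hkz0 : xval (k (toX z0)) = z).
    { rewrite Hc1, Hz0X by lra; apply Hcancel. }
    assert (Hkz0X : k (toX z0) = toX z).
    { apply xval_inj; rewrite Hkz0, toX_val; [reflexivity|].
      rewrite <- Hkz0; apply xval_range. }
    apply (Havpull z0); [| exact Hz0].
    rewrite <- Hz0X, <- (Hk1 (toX z0)), Hkz0X.
    apply (in_map (fun z => xval (ki (toX z)))), Hz. }
  destruct (HLf u' v' Huv' HavLf) as [c2 Hc2].
  exists (sgn s2 * c1 + c2); intros x Hx; unfold comp.
  rewrite Hc2, Hc1, sgn_eqb by (try rewrite Hc1; auto); ring.
Qed.

(* Breakpoints of ki: the images of the endpoints of the pieces of k, and the
   values of k at the left endpoints. *)
Lemma isometric_pieces_inv s k ki : inverse_pair k ki ->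
  isometric_pieces s k 1 -> isometric_off_finite s ki.
Proof.
  intros [Hk1 Hk2] (n & a & Ha & Hp).
  destruct (finite_choice 0 _ n Hp) as [c Hc].
  exists (map (fun i => sgn s * a i + c i) (seq 0 n)
       ++ map (fun i => sgn s * a (S i) + c i) (seq 0 n)
       ++ map (fun i => xval (k (toX (a i)))) (seq 0 n)).
  intros u v Huv Hav.
  destruct (avoids_app _ _ _ _ Hav) as [Havl Hav'].
  destruct (avoids_app _ _ _ _ Hav') as [Havr Havk].
  destruct (classic (exists y : X, u < xval y < v)) as [[y0 Hy0] | Hempty];
    [| now apply isometric_on_empty].
  destruct (partition_locate _ _ _ Ha (xval (ki y0)) (xval_range _)) as (i & Hi & Hx0).
  assert (Hai : 0 <= a i) by (rewrite <- (proj1 Ha); apply (partition_mono _ _ _ Ha); lia).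
  assert (HaSi : a (S i) <= 1)
    by (rewrite <- (proj1 (proj2 Ha)); apply (partition_mono _ _ _ Ha); lia).
  assert (Hx0' : a i < xval (ki y0)).
  { destruct (xval_range (ki y0)); destruct Hx0 as [[Hlt | Heq] _]; [assumption | exfalso].
    assert (Hki : toX (a i) = ki y0) by (apply xval_inj; rewrite toX_val; lra).
    apply (Havk (xval y0)); [| exact Hy0].
    rewrite <- (Hk2 y0), <- Hki. apply (in_map (fun i => xval (k (toX (a i))))), in_seq; lia. }
  assert (Hy0c : xval y0 = sgn s * xval (ki y0) + c i) by (rewrite <- Hc, Hk2; auto; lra).
  assert (Hl : sgn s * a i + c i <= u \/ v <= sgn s * a i + c i).
  { apply (avoids_side _ _ _ _ Havl), (in_map (fun i => sgn s * a i + c i)), in_seq; lia. }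
  assert (Hr : sgn s * a (S i) + c i <= u \/ v <= sgn s * a (S i) + c i).
  { apply (avoids_side _ _ _ _ Havr), (in_map (fun i => sgn s * a (S i) + c i)), in_seq; lia. }
  exists (- sgn s * c i); intros y Hy.
  set (z := sgn s * (xval y - c i)).
  assert (Hz : a i < z < a (S i)) by (unfold z; destruct s; simpl in *; destruct Hl, Hr; lra).
  assert (Hkz : k (toX z) = y).
  { apply xval_inj; rewrite (Hc i Hi), toX_val by (try rewrite toX_val; lra).
    unfold z; destruct s; simpl; ring. }
  assert (Hki : ki y = toX z) by (rewrite <- Hkz; apply Hk1).
  rewrite Hki, toX_val by lra; unfold z; destruct s; simpl; ring.
Qed.

Lemma isometric_off_finite_inv s k ki : inverse_pair k ki ->
  isometric_off_finite s k -> isometric_off_finite s ki.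
Proof. intros Hk Hs; apply (isometric_pieces_inv s k ki Hk), isometric_off_finite_pieces, Hs. Qed.

Lemma isometric_off_finite_orientation_unique s t f c u v :
  isometric_off_finite s f -> u < v ->
  (forall y, u < y < v -> exists x : X, xval x = y /\ xval (f x) = sgn t * y + c) ->
  s = t.
Proof.
  intros [L HL] Huv Hf.
  destruct (avoids_gap L u v Huv) as (u' & v' & Hu & Huv' & Hv & Hav).
  destruct (HL u' v' Huv' Hav) as [c' Hc'].
  destruct (Hf ((u' + v') / 2)) as (x1 & E1 & F1); [lra|].
  destruct (Hf ((u' + 3 * v') / 4)) as (x2 & E2 & F2); [lra|].
  rewrite Hc', E1 in F1 by lra; rewrite Hc', E2 in F2 by lra.
  destruct s, t; simpl in *; auto; lra.
Qed.

Lemma piecewise_isometric_false_iff f :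
  piecewise_isometric false f <-> isometric_pieces true f 1.
Proof.
  split.
  - intros (n & a & Ha0 & Han & Hinc & Hp); exists n, a.
    split; [repeat split; assumption|]. intros i Hi.
    destruct (Hp i Hi) as [c [Hc | [Hfalse _]]]; [| discriminate].
    exists c; intros x Hx; rewrite Hc by assumption; simpl; ring.
  - intros (n & a & (Ha0 & Han & Hinc) & Hp); exists n, a.
    repeat split; try assumption. intros i Hi; destruct (Hp i Hi) as [c Hc].
    exists c; left; intros x Hx; rewrite Hc by assumption; simpl; ring.
Qed.

Lemma piecewise_isometric_true_pieces f : piecewise_isometric true f ->
  exists n a, partition 1 n a /\
    forall i, (i < n)%nat -> exists s, isometric_on s f (a i) (a (S i)).
Proof.
  intros (n & a & Ha0 & Han & Hinc & Hp); exists n, a.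
  split; [repeat split; assumption|]. intros i Hi.
  destruct (Hp i Hi) as [c [Hc | [_ Hc]]]; [exists true | exists false]; exists c;
    intros x Hx; rewrite Hc by assumption; simpl; ring.
Qed.

Lemma IETplus_hat_off_finite h : IETplus_hat h -> isometric_off_finite true h.
Proof.
  intros [_ Hh]; apply isometric_pieces_off_finite, piecewise_isometric_false_iff, Hh.
Qed.

Lemma IETplus_hat_of_off_finite f :
  bijection f -> isometric_off_finite true f -> IETplus_hat f.
Proof.
  intros Hb Hs; split; [assumption|].
  apply piecewise_isometric_false_iff, isometric_off_finite_pieces, Hs.
Qed.

Lemma IETplus_hat_in_IETplus f : IETplus_hat f -> in_IETplus f.
Proof. intros Hf; exists f; split; [assumption | exists nil; auto]. Qed.

Lemma in_IETplus_off_finite f : in_IETplus f -> isometric_off_finite true f.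
Proof.
  intros [h [Hh Heq]]; apply (isometric_off_finite_eqfin _ _ h), Heq.
  apply IETplus_hat_off_finite, Hh.
Qed.

Lemma R_rep_off_finite r : is_R_rep r -> isometric_off_finite false r.
Proof.
  intros [_ [l Hl]]. exists (map xval l). intros u v Huv Hav. exists 1; intros x Hx.
  rewrite Hl; [simpl; ring|]. intros Hin; apply (Hav (xval x)); [apply in_map|]; auto.
Qed.

(* x |-> 1 - x, with 0 fixed so that it maps X onto itself. *)
Definition reflection (x : X) : X :=
  toX (if Req_dec_T (xval x) 0 then 0 else 1 - xval x).

Lemma reflection_val x :
  xval (reflection x) = if Req_dec_T (xval x) 0 then 0 else 1 - xval x.
Proof.
  apply toX_val; pose proof (xval_range x); destruct (Req_dec_T (xval x) 0); lra.
Qed.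

Lemma reflection_involutive x : reflection (reflection x) = x.
Proof.
  apply xval_inj; rewrite !reflection_val; pose proof (xval_range x).
  destruct (Req_dec_T (xval x) 0) as [H0 | H0];
    destruct (Req_dec_T _ 0); rewrite ?reflection_val; lra.
Qed.

Lemma reflection_R_rep : is_R_rep reflection.
Proof.
  split; [exists reflection; split; apply reflection_involutive|].
  exists (toX 0 :: nil); intros x Hx. rewrite reflection_val.
  destruct (Req_dec_T (xval x) 0) as [H0 | H0]; [| reflexivity].
  exfalso; apply Hx; left; apply xval_inj; rewrite H0, toX_val; lra.
Qed.

Lemma in_IETpm_iff_off_finite g :
  bijection g -> (in_IETpm g <-> exists s, isometric_off_finite s g).
Proof.
  intros [gi Hgi]; split.
  - intros [Hplus | (r & h & Hr & Hh & Heq)]; [exists true; now apply in_IETplus_off_finite|].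
    exists false; apply (isometric_off_finite_eqfin false g (comp r h)); [| exact Heq].
    destruct Hh as [[hi Hhi] Hh].
    apply (isometric_off_finite_comp true false h hi r Hhi).
    + apply IETplus_hat_off_finite; split; [exists hi|]; assumption.
    + apply R_rep_off_finite, Hr.
  - intros [[|] Hs]; [left; apply IETplus_hat_in_IETplus, IETplus_hat_of_off_finite;
                         [exists gi|]; assumption|].
    right; exists reflection, (comp reflection g); split; [apply reflection_R_rep|]; split.
    + apply IETplus_hat_of_off_finite.
      * exists (comp gi reflection).
        apply inverse_pair_comp; [split|]; auto using reflection_involutive.
      * apply (isometric_off_finite_comp false false g gi reflection Hgi Hs).
        apply R_rep_off_finite, reflection_R_rep.
    + exists nil; intros x _; unfold comp; now rewrite reflection_involutive.
Qed.

Lemma conjugate_IETplus_hat s g gi h : inverse_pair g gi ->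
  isometric_off_finite s g -> IETplus_hat h -> IETplus_hat (comp g (comp h gi)).
Proof.
  intros Hgi Hs Hh; pose proof (IETplus_hat_off_finite h Hh) as Hh'.
  destruct Hh as [[hi Hhi] _].
  assert (Hinv : inverse_pair (comp h gi) (comp g hi))
    by (apply inverse_pair_comp; [| apply inverse_pair_sym]; assumption).
  apply IETplus_hat_of_off_finite; [exists (comp (comp g hi) gi); now apply inverse_pair_comp|].
  pose proof (isometric_off_finite_comp _ _ _ _ _ (inverse_pair_sym _ _ Hgi)
                (isometric_off_finite_inv s g gi Hgi Hs) Hh') as Hhgi.
  pose proof (isometric_off_finite_comp _ _ _ _ _ Hinv Hhgi Hs) as Hconj.
  destruct s; exact Hconj.
Qed.

Definition swap_val (p q d y : R) : R :=
  if excluded_middle_informative (p <= y < p + d) then y + (q - p)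
  else if excluded_middle_informative (q <= y < q + d) then y - (q - p)
  else y.

Lemma swap_val_left p q d y : p <= y < p + d -> swap_val p q d y = y + (q - p).
Proof. intros H; unfold swap_val; destruct (excluded_middle_informative _); tauto. Qed.

Lemma swap_val_right p q d y :
  ~ (p <= y < p + d) -> q <= y < q + d -> swap_val p q d y = y - (q - p).
Proof.
  intros H H'; unfold swap_val.
  destruct (excluded_middle_informative _); [tauto|].
  destruct (excluded_middle_informative _); tauto.
Qed.

Lemma swap_val_outside p q d y :
  ~ (p <= y < p + d) -> ~ (q <= y < q + d) -> swap_val p q d y = y.
Proof.
  intros H H'; unfold swap_val.
  destruct (excluded_middle_informative _); [tauto|].
  destruct (excluded_middle_informative _); tauto.
Qed.

Section IntervalSwap.

Variables p q d : R.
Hypothesis Hp : 0 <= p.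
Hypothesis Hq : 0 <= q.
Hypothesis Hpd : p + d <= 1.
Hypothesis Hqd : q + d <= 1.
Hypothesis Hdisj : p + d <= q \/ q + d <= p.

Lemma swap_val_range y : 0 <= y < 1 -> 0 <= swap_val p q d y < 1.
Proof.
  intros Hy; destruct (classic (p <= y < p + d)) as [I | nI];
    [rewrite swap_val_left by auto; lra|].
  destruct (classic (q <= y < q + d)) as [J | nJ];
    [rewrite swap_val_right by auto; lra | rewrite swap_val_outside; auto].
Qed.

Lemma swap_val_involutive y : swap_val p q d (swap_val p q d y) = y.
Proof.
  destruct (classic (p <= y < p + d)) as [I | nI].
  { rewrite (swap_val_left _ _ _ y), swap_val_right by (auto; lra); ring. }
  destruct (classic (q <= y < q + d)) as [J | nJ].
  { rewrite (swap_val_right _ _ _ y), swap_val_left by (auto; lra); ring. }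
  rewrite !(swap_val_outside _ _ _ y); auto.
Qed.

Definition interval_swap (x : X) : X := toX (swap_val p q d (xval x)).

Lemma interval_swap_val x : xval (interval_swap x) = swap_val p q d (xval x).
Proof. apply toX_val, swap_val_range, xval_range. Qed.

Lemma interval_swap_IETplus_hat : IETplus_hat interval_swap.
Proof.
  assert (Hinv : forall x, interval_swap (interval_swap x) = x).
  { intros x; apply xval_inj; rewrite !interval_swap_val; apply swap_val_involutive. }
  apply IETplus_hat_of_off_finite; [exists interval_swap; split; exact Hinv|].
  exists (p :: p + d :: q :: q + d :: nil); intros u v Huv Hav.
  assert (Hside : forall e, In e (p :: p + d :: q :: q + d :: nil) -> e <= u \/ v <= e)
    by (intros e; apply avoids_side, Hav).
  destruct (Hside p ltac:(simpl; auto)) as [S1 | S1];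
  destruct (Hside (p + d) ltac:(simpl; auto)) as [S2 | S2];
  destruct (Hside q ltac:(simpl; auto)) as [S3 | S3];
  destruct (Hside (q + d) ltac:(simpl; auto 6)) as [S4 | S4].
  all: destruct (classic (p <= u /\ v <= p + d)) as [I | nI];
    [exists (q - p); intros x Hx; rewrite interval_swap_val, swap_val_left; simpl; lra|].
  all: destruct (classic (q <= u /\ v <= q + d)) as [J | nJ];
    [exists (- (q - p)); intros x Hx; rewrite interval_swap_val, swap_val_right; simpl; lra|].
  all: exists 0; intros x Hx; rewrite interval_swap_val, swap_val_outside; simpl; lra.
Qed.

End IntervalSwap.

(* Conjugating the swap of [a j, a j + d[ and [a i, a i + d[ by g yields a map
   reversing orientation on g([a j, a j + d[). *)
Lemma mixed_orientations_not_normalizing g gi n a i j :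
  inverse_pair g gi -> partition 1 n a -> (i < n)%nat -> (j < n)%nat -> i <> j ->
  isometric_on false g (a i) (a (S i)) -> isometric_on true g (a j) (a (S j)) ->
  exists h, IETplus_hat h /\ ~ isometric_off_finite true (comp g (comp h gi)).
Proof.
  intros [Hg1 _] Ha Hi Hj Hij [ci Hci] [cj Hcj].
  assert (Hbound : forall k, (k <= n)%nat -> 0 <= a k <= 1).
  { intros k Hk; pose proof Ha as (Ha0 & Han & _); split;
      [rewrite <- Ha0 | rewrite <- Han]; apply (partition_mono _ _ _ Ha); lia. }
  pose proof (Hbound i ltac:(lia)); pose proof (Hbound (S i) ltac:(lia)).
  pose proof (Hbound j ltac:(lia)); pose proof (Hbound (S j) ltac:(lia)).
  pose proof (proj2 (proj2 Ha) i Hi); pose proof (proj2 (proj2 Ha) j Hj).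
  set (d := Rmin (a (S j) - a j) (a (S i) - a i)).
  assert (Hdj : d <= a (S j) - a j) by apply Rmin_l.
  assert (Hdi : d <= a (S i) - a i) by apply Rmin_r.
  assert (Hd : 0 < d) by (apply Rmin_glb_lt; lra).
  assert (Hdisj : a j + d <= a i \/ a i + d <= a j).
  { destruct (Nat.lt_gt_cases i j) as [[Hlt | Hlt] _]; [exact Hij | right | left].
    - pose proof (partition_mono _ _ _ Ha (S i) j ltac:(lia)); lra.
    - pose proof (partition_mono _ _ _ Ha (S j) i ltac:(lia)); lra. }
  set (h := interval_swap (a j) (a i) d).
  exists h; split; [apply interval_swap_IETplus_hat; lra|]. intros Hconj.
  enough (true = false) by discriminate.
  apply (isometric_off_finite_orientation_unique _ _ _ (cj + ci + a j - a i)
           (a j + cj) (a j + d + cj) Hconj); [lra|].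
  intros y Hy. assert (Hx : xval (toX (y - cj)) = y - cj) by (apply toX_val; lra).
  assert (Hhx : xval (h (toX (y - cj))) = y - cj + (a i - a j)).
  { unfold h; rewrite interval_swap_val, swap_val_left, Hx by lra; reflexivity. }
  exists (g (toX (y - cj))); split.
  - rewrite Hcj, Hx by lra; simpl; ring.
  - unfold comp; rewrite Hg1, Hci, Hhx by lra; simpl; ring.
Qed.

Lemma normalizer_single_orientation g :
  IETbow_hat g -> in_normalizer_IETplus g -> exists s, isometric_pieces s g 1.
Proof.
  intros [_ Hpw] (gi & Hgi & Hconj & _).
  destruct (piecewise_isometric_true_pieces g Hpw) as (n & a & Ha & Hp).
  destruct (classic (forall i, (i < n)%nat -> isometric_on true g (a i) (a (S i))))
    as [Hall | Hnot_pres]; [exists true, n, a; auto|].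
  destruct (classic (forall i, (i < n)%nat -> isometric_on false g (a i) (a (S i))))
    as [Hall | Hnot_rev]; [exists false, n, a; auto|].
  exfalso.
  apply not_all_ex_not in Hnot_pres as [i Hi]; apply imply_to_and in Hi as [Hi Hi_rev].
  apply not_all_ex_not in Hnot_rev as [j Hj]; apply imply_to_and in Hj as [Hj Hj_pres].
  assert (Hi' : isometric_on false g (a i) (a (S i))) by (destruct (Hp i Hi) as [[|] ?]; tauto).
  assert (Hj' : isometric_on true g (a j) (a (S j))) by (destruct (Hp j Hj) as [[|] ?]; tauto).
  assert (Hij : i <> j) by (intros ->; tauto).
  destruct (mixed_orientations_not_normalizing g gi n a i j Hgi Ha Hi Hj Hij Hi' Hj')
    as (h & Hh & Hnot).
  apply Hnot, in_IETplus_off_finite, Hconj, Hh.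
Qed.

Lemma normalizer_iff_off_finite g :
  IETbow_hat g -> (in_normalizer_IETplus g <-> exists s, isometric_off_finite s g).
Proof.
  intros Hg; split.
  - intros Hn; destruct (normalizer_single_orientation g Hg Hn) as [s Hs].
    exists s; apply isometric_pieces_off_finite, Hs.
  - intros [s Hs]; destruct Hg as [[gi Hgi] _].
    exists gi; split; [exact Hgi|].
    split; intros h Hh; apply IETplus_hat_in_IETplus.
    + apply (conjugate_IETplus_hat s g gi); assumption.
    + apply (conjugate_IETplus_hat s gi g);
        [apply inverse_pair_sym | apply (isometric_off_finite_inv s g) |]; assumption.
Qed.

Theorem proposition5p1 :
  forall g : X -> X, IETbow_hat g ->
    (in_normalizer_IETplus g <-> in_IETpm g).
Proof.
  intros g Hg.
  rewrite (normalizer_iff_off_finite g Hg), (in_IETpm_iff_off_finite g (proj1 Hg)).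
  reflexivity.
Qed.
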